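(* For every positive integer $n$, the number \[ a_n:=\frac{1}{8n^2\binom{2n}{n}^2}\sum_{k=0}^{n-1}(-1)^{n-1-k}\binom{2k}{k}^5(205k^2+160k+32) \] is a positive integer. *)

From mathcomp Require Import all_boot all_order all_algebra.
Set Implicit Arguments. Unset Strict Implicit. Unset Printing Implicit Defensive.
Import Order.TTheory GRing.Theory Num.Theory.
Local Open Scope ring_scope.

Definition a_seq (n : nat) : rat :=
  (8 * (n%:R) ^+ 2 * ('C(2 * n, n))%:R ^+ 2)^-1 *
  \sum_(0 <= k < n)
     (-1) ^+ (n - 1 - k)%N * ('C(2 * k, k))%:R ^+ 5
       * (205 * (k%:R) ^+ 2 + 160 * k%:R + 32).

From mathcomp Require Import all_boot all_order all_algebra.
From mathcomp Require Import ring lra zify.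
Set Implicit Arguments. Unset Strict Implicit. Unset Printing Implicit Defensive.
Import Order.TTheory GRing.Theory Num.Theory.
Local Open Scope ring_scope.

(* The alternating sum is (-1)^(n-1) 8 n^2 C(2n,n)^2 times the integer
   sum_(j < n) (-1)^j C(2n-1,j) C(n-1+j,j)^2.  This follows by telescoping
   a Wilf-Zeilberger pair F(n,j), G(n,j) whose summand F(n,j) is that
   integer term multiplied by n^2 C(2n,n)^2: the WZ identity
   F(n+1,j) - F(n,j) = G(n,j) - G(n,j-1) makes the row sums of F change by
   exactly one term of the alternating sum from n to n+1.  Positivity holds
   because an alternating sum of strictly increasing positive terms, ending
   with a plus sign, is positive. *)

Section AlternatingSum.

Variable R : pzRingType.

Definition alt_sum (f : nat -> R) (n : nat) : R :=
  \sum_(0 <= k < n) (-1) ^+ (n - 1 - k)%N * f k.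

Lemma alt_sumS (f : nat -> R) (n : nat) : alt_sum f n.+1 = f n - alt_sum f n.
Proof.
rewrite /alt_sum big_nat_recr //= (_ : (n.+1 - 1 - n = 0)%N); last by lia.
rewrite expr0 mul1r addrC; congr (_ + _).
rewrite -sumrN; apply: eq_big_nat => k /andP[_ lt_kn].
by rewrite (_ : (n.+1 - 1 - k = (n - 1 - k).+1)%N) ?exprS ?mulN1r ?mulNr //; lia.
Qed.

End AlternatingSum.

Lemma alt_sum_gt0_le (R : realDomainType) (f : nat -> R) :
  0 < f 0 -> (forall n, f n < f n.+1) ->
  forall n, 0 < alt_sum f n.+1 <= f n.
Proof.
move=> f0_gt0 f_incr; elim=> [|n /andP[S_gt0 S_le]].
  by rewrite alt_sumS /alt_sum big_geq // subr0 f0_gt0 lexx.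
have := f_incr n; rewrite alt_sumS => f_lt; apply/andP; split; lra.
Qed.

Section BinomialRatios.

Context {R : numFieldType}.

Lemma bin_ratio_left (j e : nat) :
  'C(j + e, j.+1)%:R = 'C(j + e, j)%:R * e%:R / j.+1%:R :> R.
Proof.
have := mul_bin_left (j + e) j; rewrite (_ : (j + e - j = e)%N); last by lia.
move=> h; apply: (@mulIf _ j.+1%:R); first by rewrite pnatr_eq0.
by rewrite mulfVK ?pnatr_eq0 // -!natrM mulnC h mulnC.
Qed.

Lemma bin_ratio_down (j e : nat) :
  'C(j + e + 1, j)%:R = 'C(j + e, j)%:R * (j + e + 1)%:R / (e + 1)%:R :> R.
Proof.
have := mul_bin_down (j + e + 1) j.
rewrite (_ : (j + e + 1 - j = e + 1)%N); last by lia.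
rewrite (_ : ((j + e + 1).-1 = j + e)%N); last by lia.
move=> h; apply: (@mulIf _ (e + 1)%:R); first by rewrite pnatr_eq0 addn1.
rewrite mulfVK ?pnatr_eq0 ?addn1 // -!natrM; rewrite !addn1 in h.
by rewrite mulnC [in RHS]mulnC h.
Qed.

Lemma bin_ratio_diag (j e : nat) :
  'C(j + e + 1, j.+1)%:R = 'C(j + e, j)%:R * (j + e + 1)%:R / j.+1%:R :> R.
Proof.
have := mul_bin_diag (j + e + 1) j; rewrite (_ : ((j + e + 1).-1 = j + e)%N); last by lia.
move=> h; apply: (@mulIf _ j.+1%:R); first by rewrite pnatr_eq0.
by rewrite mulfVK ?pnatr_eq0 // -!natrM mulnC -h mulnC.
Qed.

Lemma central_binS (n : nat) :
  'C(2 * n.+1, n.+1)%:R = 'C(2 * n, n)%:R * (2 * (2 * n%:R + 1)) / (n%:R + 1) :> R.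
Proof.
rewrite (_ : (2 * n.+1 = n + n.+1 + 1)%N) ?bin_ratio_diag; last by lia.
rewrite (_ : (n + n.+1 = n + n + 1)%N) ?bin_ratio_down; last by lia.
rewrite (_ : (n + n = 2 * n)%N); last by lia.
rewrite -[n.+1]addn1 !natrD.
by field; rewrite natr1 pnatr_eq0.
Qed.

End BinomialRatios.

Definition series_term (k : nat) : rat :=
  'C(2 * k, k)%:R ^+ 5 * (205 * k%:R ^+ 2 + 160 * k%:R + 32).

Lemma a_seqE (n : nat) :
  a_seq n = (8 * n%:R ^+ 2 * 'C(2 * n, n)%:R ^+ 2)^-1 * alt_sum series_term n.
Proof. by congr (_ * _); apply: eq_bigr => k _; rewrite -mulrA. Qed.

Definition wz_term (n j : nat) : rat :=
  (-1) ^+ j * 'C((2 * n).-1, j)%:R * 'C(n.-1 + j, j)%:R ^+ 2.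

Definition wz_F (n j : nat) : rat := (n%:R * 'C(2 * n, n)%:R) ^+ 2 * wz_term n j.

(* The rational certificate of the WZ pair (wz_F, wz_G). *)
Definition wz_R (n k : nat) : rat :=
  (2 * n%:R * (n%:R + 1) * (30 * n%:R + 11) + k%:R * (12 * n%:R ^+ 2 + 47 * n%:R + 16)
   - (21 * n%:R + 8) * k%:R ^+ 2) / (8 * (2 * n%:R + 1) ^+ 3).

Definition wz_G (n j : nat) : rat := wz_R n j.+1 * wz_F n.+1 j.

Lemma wz_F_base (n : nat) : wz_F n.+2 0 - wz_F n.+1 0 = wz_G n.+1 0.
Proof.
rewrite /wz_G /wz_F /wz_term !bin0 central_binS /wz_R !exprS !expr0.
field; have := ler0n rat n => n_ge0.
by repeat (apply/andP; split); apply: lt0r_neq0; lra.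
Qed.

Lemma wz_F_step (n j : nat) : (j.+1 < n)%N ->
  wz_F n.+1 j.+1 - wz_F n j.+1 = wz_G n j.+1 - wz_G n j.
Proof.
move=> lt_jn; have [d ->] : exists d, n = (j + d + 2)%N by exists (n - j.+2)%N; lia.
rewrite /wz_G /wz_F /wz_term central_binS.
(* Reduce every binomial to 'C(j + (j + 2d + 3), j) or 'C(j + (j + d + 1), j),
   leaving an identity of rational functions. *)
rewrite (_ : ((2 * (j + d + 2)).-1 = j + (j + 2 * d + 3))%N); last by lia.
rewrite (_ : ((2 * (j + d + 2).+1).-1 = j + (j + 2 * d + 5))%N); last by lia.
rewrite (_ : ((j + d + 2).-1 + j.+1 = j + (j + d + 2))%N); last by lia.
rewrite (_ : ((j + d + 2).+1.-1 + j = j + (j + d + 1) + 1)%N); last by lia.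
rewrite (_ : ((j + d + 2).+1.-1 + j.+1 = j + (j + d + 3))%N); last by lia.
rewrite (bin_ratio_left j (j + 2 * d + 5)) (bin_ratio_left j (j + 2 * d + 3)).
rewrite (_ : (j + (j + 2 * d + 5) = j + (j + 2 * d + 4) + 1)%N); last by lia.
rewrite (bin_ratio_down j (j + 2 * d + 4)).
rewrite (_ : (j + (j + 2 * d + 4) = j + (j + 2 * d + 3) + 1)%N); last by lia.
rewrite (bin_ratio_down j (j + 2 * d + 3)) (bin_ratio_left j (j + d + 3)).
rewrite (_ : (j + (j + d + 3) = j + (j + d + 2) + 1)%N); last by lia.
rewrite (bin_ratio_down j (j + d + 2)) (bin_ratio_left j (j + d + 2)).
rewrite (_ : (j + (j + d + 2) = j + (j + d + 1) + 1)%N); last by lia.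
rewrite (bin_ratio_down j (j + d + 1)) /wz_R !exprS !expr0.
field; have := ler0n rat j; have := ler0n rat d => d_ge0 j_ge0.
by repeat (apply/andP; split); apply: lt0r_neq0; lra.
Qed.

Lemma wz_F_diag (n : nat) :
  wz_F n.+2 n.+1 + wz_G n.+1 n = (-1) ^+ n.+1 * series_term n.+1 / 8.
Proof.
rewrite /wz_G /wz_F /wz_term /series_term central_binS.
rewrite (_ : ((2 * n.+2).-1 = n + (n + 3))%N); last by lia.
rewrite (_ : (n.+2.-1 + n.+1 = n + (n + 1) + 1)%N); last by lia.
rewrite (_ : (n.+2.-1 + n = n + (n + 1))%N); last by lia.
rewrite (_ : (2 * n.+1 = n + (n + 1) + 1)%N); last by lia.
rewrite (bin_ratio_diag n (n + 1)) (bin_ratio_left n (n + 3)).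
rewrite (_ : (n + (n + 3) = n + (n + 2) + 1)%N); last by lia.
rewrite (bin_ratio_down n (n + 2)).
rewrite (_ : (n + (n + 2) = n + (n + 1) + 1)%N); last by lia.
rewrite (bin_ratio_down n (n + 1)) /wz_R !exprS !expr0.
field; have := ler0n rat n => n_ge0.
by repeat (apply/andP; split); apply: lt0r_neq0; lra.
Qed.

Lemma sum_wz_F_diff (n m : nat) : (m <= n)%N ->
  \sum_(j < m.+1) (wz_F n.+2 j - wz_F n.+1 j) = wz_G n.+1 m.
Proof.
elim: m => [|m IH] le_mn; first by rewrite big_ord1 wz_F_base.
rewrite big_ord_recr /= IH 1?wz_F_step; [ring | lia | lia].
Qed.

Definition wz_sum (n : nat) : rat := \sum_(j < n) wz_F n j.

Lemma wz_sumS (n : nat) :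
  wz_sum n.+2 = wz_sum n.+1 + (-1) ^+ n.+1 * series_term n.+1 / 8.
Proof.
rewrite /wz_sum big_ord_recr /= -wz_F_diag -(sum_wz_F_diff (leqnn n)).
rewrite addrC [RHS]addrCA; congr (_ + _); rewrite -big_split /=.
by apply: eq_bigr => j _; rewrite addrC subrK.
Qed.

Lemma alt_sum_series_term (n : nat) :
  alt_sum series_term n.+1 = 8 * (-1) ^+ n * wz_sum n.+1.
Proof.
elim: n => [|n IH].
  rewrite alt_sumS /alt_sum big_geq // /wz_sum big_ord1 /wz_F /wz_term /series_term.
  by rewrite !bin0 (_ : 'C(2 * 1, 1) = 2%N).
rewrite alt_sumS IH wz_sumS exprS.
by field: (sqrr_sign rat n).
Qed.

Lemma leq_central_binS (n : nat) : ('C(2 * n, n) <= 'C(2 * n.+1, n.+1))%N.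
Proof. by rewrite (_ : (2 * n.+1 = (2 * n).+2)%N) ?binS; lia. Qed.

Lemma series_term_ltS (n : nat) : series_term n < series_term n.+1.
Proof.
have c_gt0 : (0 : rat) < 'C(2 * n, n)%:R by rewrite ltr0n bin_gt0 leq_pmull.
have c_le : ('C(2 * n, n)%:R : rat) <= 'C(2 * n.+1, n.+1)%:R.
  by rewrite ler_nat leq_central_binS.
have c5_le : ('C(2 * n, n)%:R : rat) ^+ 5 <= 'C(2 * n.+1, n.+1)%:R ^+ 5.
  by rewrite lerXn2r ?nnegrE ?(le_trans (ltW c_gt0)) ?(ltW c_gt0).
have c5_gt0 : (0 : rat) < 'C(2 * n, n)%:R ^+ 5 by rewrite exprn_gt0.
have n_ge0 := ler0n rat n.
rewrite /series_term -natr1; move: c5_le c5_gt0.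
set c5 := _ ^+ 5; set c5' := _ ^+ 5; clearbody c5 c5'; nra.
Qed.

Lemma a_seq_gt0 (n : nat) : 0 < a_seq n.+1.
Proof.
have [S_gt0 _] := andP (alt_sum_gt0_le (isT : 0 < series_term 0) series_term_ltS n).
by rewrite a_seqE mulr_gt0 // invr_gt0 !mulr_gt0 ?exprn_gt0 ?ltr0n ?bin_gt0 ?leq_pmull.
Qed.

Lemma a_seq_wz_term (n : nat) :
  a_seq n.+1 = (-1) ^+ n * \sum_(j < n.+1) wz_term n.+1 j.
Proof.
have c_neq0 : ('C(2 * n.+1, n.+1)%:R : rat) != 0.
  by rewrite pnatr_eq0 -lt0n bin_gt0 leq_pmull.
rewrite a_seqE alt_sum_series_term /wz_sum /wz_F -mulr_sumr.
by field; rewrite c_neq0 addrC natr1 pnatr_eq0.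
Qed.

Lemma a_seq_int (n : nat) : a_seq n.+1 \is a Num.int.
Proof.
rewrite a_seq_wz_term rpredMsign; apply: rpred_sum => j _.
by rewrite /wz_term -mulrA rpredMsign rpredM ?rpredX ?rpred_nat.
Qed.

Theorem corollary14 (n : nat) : (0 < n)%N ->
  exists m : nat, (0 < m)%N /\ a_seq n = m%:R.
Proof.
case: n => [//|n] _.
have /natrP[m a_eq] : a_seq n.+1 \is a Num.nat.
  by rewrite natrEint a_seq_int ltW ?a_seq_gt0.
by exists m; rewrite -(ltr0n rat) -a_eq a_seq_gt0.
Qed.
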